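(* Let $IS\in\{\Box,\blacksquare\}^2$. There is no correct compositional translation from $\mathrm{SYNCSIMPLE}$ into $\mathrm{LOCKSIMPLE}_{2,IS}$ of blocking type $(P_1,P_2)$.
   Context: $\mathrm{SYNCSIMPLE}$: subprocesses $\mathcal{U} ::= \checkmark \mid 0 \mid\, !\mathcal{U} \mid\, ?\mathcal{U}$; processes are finite parallel compositions ($\mid$ associative, commutative, $0$ a unit). Reduction: $!\mathcal{U}_1\mid ?\mathcal{U}_2\mid \mathcal{P}\to \mathcal{U}_1\mid\mathcal{U}_2\mid\mathcal{P}$. Successful: of form $\checkmark\mid\mathcal{P}$; may-convergent: reduces to a successful process; must-convergent: every reachable process is may-convergent. $\mathrm{LOCKSIMPLE}_{k,IS}$ ($IS\in\{\Box,\blacksquare\}^k$, $\Box$ empty, $\blacksquare$ full): subprocesses are words over $\{P_1,T_1,\dots,P_k,T_k\}$ followed by $0$ or $\checkmark$; states $(\mathcal{P},C)$ reduce by $(P_i\mathcal{U}\mid\mathcal{P},C)\to(\mathcal{U}\mid\mathcal{P},C[C_i:=\blacksquare])$ only if $C_i=\Box$, and $(T_i\mathcal{U}\mid\mathcal{P},C)\to(\mathcal{U}\mid\mathcal{P},C[C_i:=\Box])$ always. Success = process contains $\checkmark$; a process $\mathcal{P}$ is may/must-convergent iff the state $(\mathcal{P},IS)$ is. A compositional translation $\tau$ is given by words $\tau(!),\tau(?)$ with $\tau(0)=0$, $\tau(\checkmark)=\checkmark$, $\tau(!\mathcal{U})=\tau(!)\tau(\mathcal{U})$, $\tau(?\mathcal{U})=\tau(?)\tau(\mathcal{U})$,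 $\tau$ commuting with $\mid$; correct = preserves and reflects may- and must-convergence. Blocking type: for a word $S$, run $S$ as a single subprocess from $IS$; if it gets stuck at an occurrence of $P_i$ which is the first symbol from $\{P_i,T_i\}$ in $S$, the blocking type of $S$ is $P_i$; if it gets stuck at a later occurrence of $P_i$ the type is $P_iP_i$. $\tau$ has blocking type $(W_1,W_2)$ if $\tau(!)$ has type $W_1$ and $\tau(?)$ type $W_2$. *)

From Stdlib Require Import List Permutation.
From mathcomp Require Import all_boot.
Set Implicit Arguments. Unset Strict Implicit. Unset Printing Implicit Defensive.

Inductive ssub : Type :=
| STick : ssub
| SZero : ssub
| SBang : ssub -> ssub
| SQuest : ssub -> ssub.

(* A process is a finite parallel composition, represented by a list;
   | is associative/commutative with unit 0 (= empty list up to 0's):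
   reduction is taken up to permutation. *)
Definition sproc := list ssub.

Definition sstep (p q : sproc) : Prop :=
  exists (u1 u2 : ssub) (r : sproc),
    Permutation p (SBang u1 :: SQuest u2 :: r) /\ q = u1 :: u2 :: r.

Definition sreach : sproc -> sproc -> Prop := Relation_Operators.clos_refl_trans _ sstep.

Definition ssuccessful (p : sproc) : Prop := In STick p.

Definition smay (p : sproc) : Prop := exists q, sreach p q /\ ssuccessful q.
Definition smust (p : sproc) : Prop := forall q, sreach p q -> smay q.

Inductive lsym (k : nat) : Type :=
| LP : 'I_k -> lsym k
| LT : 'I_k -> lsym k.

Definition lsym_idx k (s : lsym k) : 'I_k := match s with LP i => i | LT i => i end.

Inductive lend : Type := LZero | LTick.

Definition lsub k := (list (lsym k) * lend)%type.
Definition lproc k := list (lsub k).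

(* lock configuration: true = full (black square), false = empty (white square) *)
Definition locks k := 'I_k -> bool.

Definition lupd k (C : locks k) (i : 'I_k) (b : bool) : locks k :=
  fun j => if j == i then b else C j.

Definition lstep k (s s' : lproc k * locks k) : Prop :=
  (exists i w e r, Permutation s.1 ((LP i :: w, e) :: r) /\ s.2 i = false /\
      s' = ((w, e) :: r, lupd s.2 i true)) \/
  (exists i w e r, Permutation s.1 ((LT i :: w, e) :: r) /\
      s' = ((w, e) :: r, lupd s.2 i false)).

Definition lreach k : lproc k * locks k -> lproc k * locks k -> Prop :=
  Relation_Operators.clos_refl_trans _ (@lstep k).

Definition lsuccessful k (s : lproc k * locks k) : Prop := In (nil, LTick) s.1.

Definition lmay_state k (s : lproc k * locks k) : Prop :=
  exists s', lreach s s' /\ lsuccessful s'.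
Definition lmust_state k (s : lproc k * locks k) : Prop :=
  forall s', lreach s s' -> lmay_state s'.

Definition lmay k (IS : locks k) (p : lproc k) : Prop := lmay_state (p, IS).
Definition lmust k (IS : locks k) (p : lproc k) : Prop := lmust_state (p, IS).

Fixpoint tau_sub k (wb wq : list (lsym k)) (u : ssub) : lsub k :=
  match u with
  | STick => (nil, LTick)
  | SZero => (nil, LZero)
  | SBang u' => let t := tau_sub wb wq u' in (wb ++ t.1, t.2)
  | SQuest u' => let t := tau_sub wb wq u' in (wq ++ t.1, t.2)
  end.

Definition tau k (wb wq : list (lsym k)) (p : sproc) : lproc k :=
  map (tau_sub wb wq) p.

Definition correct_translation k (IS : locks k) (wb wq : list (lsym k)) : Prop :=
  forall p : sproc,
    (smay p <-> lmay IS (tau wb wq p)) /\ (smust p <-> lmust IS (tau wb wq p)).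

(* Running a word as a single subprocess from lock state C: returns
   Some pre if execution gets stuck right after the prefix pre (at a P_j with
   C_j full), None if the whole word can be executed. *)
Fixpoint stuck_prefix k (S : list (lsym k)) (C : locks k) : option (list (lsym k)) :=
  match S with
  | nil => None
  | LP i :: S' => if C i then Some nil
                  else omap (cons (LP i)) (stuck_prefix S' (lupd C i true))
  | LT i :: S' => omap (cons (LT i)) (stuck_prefix S' (lupd C i false))
  end.

Definition blocking_type_P k (IS : locks k) (S : list (lsym k)) (i : 'I_k) : Prop :=
  exists pre post,
    stuck_prefix S IS = Some pre /\ S = pre ++ LP i :: post /\
    (forall s, In s pre -> lsym_idx s <> i).

Definition lock1 : 'I_2 := @Ordinal 2 0 isT.
Definition lock2 : 'I_2 := @Ordinal 2 1 isT.

From Stdlib Require Import List Permutation.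
From mathcomp Require Import all_boot.
From Stdlib Require Import FunctionalExtensionality Relations.
Set Implicit Arguments. Unset Strict Implicit. Unset Printing Implicit Defensive.

(* Blocking type (P1, P2) forces the initial lock state to be full and splits the
   translations as tau(!) = a P1 x and tau(?) = b P2 y, where a avoids lock 1 and b avoids
   lock 2.  If a and b both leave the locks full, tau(!✓ | ?0) deadlocks at once.
   Otherwise one prefix, say b, empties the other lock, and the parallel composition of
   the two translated actions has essentially one schedule: b runs and blocks at P2, a P1
   takes lock 1, x runs, and so on.  Every way this schedule can go on is refuted by one of
   the tests !✓ | ?0, !0 | ?✓, !✓ | ?!0, !?✓ | ?!0 (must-convergent, so no deadlock
   without ✓ is reachable) or !?✓ | ?0 (not may-convergent, so ✓ is unreachable), except
   for a hand-over of both locks back and forth through the full state, in which the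
   residual word of the first action strictly shrinks. *)

Section LockUpdates.
Variable k : nat.
Implicit Types (C : locks k) (i j : 'I_k) (b : bool).

Lemma lupd_at C i b : lupd C i b i = b.
Proof. by rewrite /lupd eqxx. Qed.

Lemma lupd_other C i j b : j != i -> lupd C i b j = C j.
Proof. by rewrite /lupd => /negbTE ->. Qed.

Lemma lupd_idem C i b b' : lupd (lupd C i b) i b' = lupd C i b'.
Proof. by apply: functional_extensionality => l; rewrite /lupd; case: (l == i). Qed.

Lemma lupd_comm C i j b b' : i != j -> lupd (lupd C i b) j b' = lupd (lupd C j b') i b.
Proof.
move=> nij; apply: functional_extensionality => l; rewrite /lupd.
by case: eqP => [->|//]; case: eqP => [Eji|//]; move: nij; rewrite Eji eqxx.
Qed.

Lemma lupd_same C i b : C i = b -> lupd C i b = C.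
Proof.
by move=> Ci; apply: functional_extensionality => l; rewrite /lupd; case: eqP => [->|].
Qed.

End LockUpdates.

Definition full_locks k : locks k := fun _ => true.
Arguments full_locks : clear implicits.

Definition avoids k (w : list (lsym k)) (i : 'I_k) : Prop :=
  forall s, In s w -> lsym_idx s <> i.

Lemma avoids_cons k (s : lsym k) w i : avoids (s :: w) i -> lsym_idx s != i /\ avoids w i.
Proof. by move=> Hw; split; [apply/eqP; apply: Hw; left | move=> t Ht; apply: Hw; right]. Qed.

Inductive run k : list (lsym k) -> locks k -> list (lsym k) -> locks k -> Prop :=
| run_refl w C : run w C w C
| run_P i w C w' C' : C i = false -> run w (lupd C i true) w' C' -> run (LP i :: w) C w' C'
| run_T i w C w' C' : run w (lupd C i false) w' C' -> run (LT i :: w) C w' C'.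

Section Runs.
Variable k : nat.
Implicit Types (C D : locks k) (i : 'I_k) (w : list (lsym k)).

Lemma run_trans w C w1 C1 w2 C2 : run w C w1 C1 -> run w1 C1 w2 C2 -> run w C w2 C2.
Proof.
elim=> [//|i v D v' D' Di _ IH|i v D v' D' _ IH] H2; first exact: run_P (IH H2).
exact: run_T (IH H2).
Qed.

Lemma run_cat w C w' C' z : run w C w' C' -> run (w ++ z) C (w' ++ z) C'.
Proof. by elim=> *; [apply: run_refl | apply: run_P | apply: run_T]. Qed.

Lemma run_size w C w' C' : run w C w' C' -> size w' <= size w.
Proof. by elim=> //= *; apply: leqW. Qed.

Lemma run_avoids w C w' C' i : run w C w' C' -> avoids w i -> C' i = C i.
Proof.
elim=> [//|l v D v' D' _ _ IH|l v D v' D' _ IH] /avoids_cons[li /IH ->];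
  by rewrite lupd_other // eq_sym.
Qed.

Lemma run_frame w C w' C' i b : run w C w' C' -> avoids w i -> run w (lupd C i b) w' (lupd C' i b).
Proof.
elim=> [v D _|l v D v' D' Dl _ IH /avoids_cons[/= li /IH Hv]|
        l v D v' D' _ IH /avoids_cons[/= li /IH Hv]]; first exact: run_refl.
- apply: run_P; first by rewrite lupd_other.
  by rewrite lupd_comm 1?eq_sym.
- by apply: run_T; rewrite lupd_comm 1?eq_sym.
Qed.

Lemma run_empty_lock w C w' C' i : run w C w' C' ->
  run w (lupd C i false) w' C' \/ run w (lupd C i false) w' (lupd C' i false).
Proof.
elim=> [v D|l v D v' D' Dl Hv IH|l v D v' D' Hv IH]; first by right; apply: run_refl.
- have [li|li] := eqVneq l i; first by left; rewrite -li lupd_same //; apply: run_P.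
  have il : i != l by rewrite eq_sym.
  by case: IH => H; [left|right]; (apply: run_P; [rewrite lupd_other | rewrite lupd_comm]).
- have [<-|li] := eqVneq l i; first by left; apply: run_T; rewrite lupd_idem.
  have il : i != l by rewrite eq_sym.
  by case: IH => H; [left|right]; apply: run_T; rewrite lupd_comm.
Qed.

Lemma run_release w C w' C' i : run w C w' C' -> C' i = false -> run w (lupd C i false) w' C'.
Proof. by move=> H Ci; case: (run_empty_lock i H); rewrite ?(lupd_same Ci). Qed.

Lemma run_outcome w C :
  (exists C', run w C [::] C') \/ (exists i w' C', run w C (LP i :: w') C' /\ C' i = true).
Proof.
elim: w C => [|[i|i] w IH] C; first by left; exists C; apply: run_refl.
- case Ci: (C i); first by right; exists i, w, C; split=> //; apply: run_refl.
  case: (IH (lupd C i true)) => [[C' H]|[l [w' [C' [H Hl]]]]].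
    by left; exists C'; apply: run_P.
  by right; exists l, w', C'; split=> //; apply: run_P.
- case: (IH (lupd C i false)) => [[C' H]|[l [w' [C' [H Hl]]]]].
    by left; exists C'; apply: run_T.
  by right; exists l, w', C'; split=> //; apply: run_T.
Qed.

Lemma run_stuck_prefix w C pre : stuck_prefix w C = Some pre ->
  exists i post C', w = pre ++ LP i :: post /\ run pre C [::] C' /\ C' i = true.
Proof.
elim: w C pre => [//|[i|i] w IH] C pre /=.
- case Ci: (C i).
    by move=> [<-]; exists i, w, C; split=> //; split=> //; apply: run_refl.
  case E: stuck_prefix => [pre'|//] [<-].
  have [l [post [C' [-> [H Hl]]]]] := IH _ _ E.
  by exists l, post, C'; split=> //; split=> //; apply: run_P.
- case E: stuck_prefix => [pre'|//] [<-].
  have [l [post [C' [-> [H Hl]]]]] := IH _ _ E.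
  by exists l, post, C'; split=> //; split=> //; apply: run_T.
Qed.

Lemma run_cons_P i w C C' :
  run (LP i :: w) C [::] C' -> C i = false /\ run w (lupd C i true) [::] C'.
Proof. by move=> H; inversion H. Qed.

End Runs.

Section Reachability.
Variable k : nat.
Implicit Types (s : lproc k * locks k) (P Q : lproc k) (C D : locks k).

Definition reaches s P C : Prop := exists P', Permutation P' P /\ lreach s (P', C).

Lemma lstep_perm P Q C s' : Permutation P Q -> lstep (P, C) s' -> lstep (Q, C) s'.
Proof.
move=> /Permutation_sym QP.
move=> [[i [w [e [r [HP rest]]]]]|[i [w [e [r [HP rest]]]]]]; [left|right];
  by exists i, w, e, r; split; first exact: Permutation_trans QP HP.
Qed.

Lemma lreach_perm P Q C s' : lreach (P, C) s' -> Permutation P Q ->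
  exists Q', Permutation s'.1 Q' /\ lreach (Q, C) (Q', s'.2).
Proof.
move=> /clos_rt_rt1n_iff R PQ; case: s' / R => [|y s' Hy /clos_rt_rt1n_iff Hs'].
  by exists Q; split=> //; apply: rt_refl.
exists s'.1; split=> //; apply: rt_trans (rt_step _ _ _ _ (lstep_perm PQ Hy)) _.
by case: s' Hs'.
Qed.

Lemma reaches_refl P C : reaches (P, C) P C.
Proof. by exists P; split=> //; apply: rt_refl. Qed.

Lemma reaches_perm s P Q C : reaches s P C -> Permutation P Q -> reaches s Q C.
Proof. by move=> [P' [P'P R]] PQ; exists P'; split=> //; apply: Permutation_trans PQ. Qed.

Lemma reaches_trans s P C Q D : reaches s P C -> reaches (P, C) Q D -> reaches s Q D.
Proof.
move=> [P' [P'P R1]] [Q' [Q'Q R2]].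
have [Q'' [Q'Q'' R3]] := lreach_perm R2 (Permutation_sym P'P).
exists Q''; split; first exact: Permutation_trans (Permutation_sym Q'Q'') Q'Q.
exact: rt_trans R1 R3.
Qed.

Lemma reaches_run_fst s w e P C w' C' :
  reaches s ((w, e) :: P) C -> run w C w' C' -> reaches s ((w', e) :: P) C'.
Proof.
move=> R1 R2; apply: reaches_trans R1 _.
elim: R2 => {w C w' C'} [w C|i w C w' C' Ci _ IH|i w C w' C' _ IH];
  [exact: reaches_refl | apply: reaches_trans IH | apply: reaches_trans IH];
  exists ((w, e) :: P); split=> //; apply: rt_step; [left|right]; by exists i, w, e, P.
Qed.

Lemma reaches_run_snd s c w e C w' C' :
  reaches s [:: c; (w, e)] C -> run w C w' C' -> reaches s [:: c; (w', e)] C'.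
Proof.
move=> R1 R2; apply: reaches_perm (perm_swap _ _ _).
exact: reaches_run_fst (reaches_perm R1 (perm_swap _ _ _)) R2.
Qed.

Definition inert C (c : lsub k) : bool :=
  match c with
  | (LP i :: _, _) => C i
  | ([::], LZero) => true
  | _ => false
  end.

Lemma all_In (T : Type) (p : pred T) (l : list T) x : all p l -> In x l -> p x.
Proof. by elim: l => //= y l IH /andP[py pl] [<-|/IH]; auto. Qed.

Lemma inert_no_lstep P C s' : (forall c, In c P -> inert C c) -> ~ lstep (P, C) s'.
Proof.
move=> Pinert [[i [w [e [r [PP [Ci _]]]]]]|[i [w [e [r [PP _]]]]]];
  have := Pinert _ (Permutation_in _ (Permutation_sym PP) (in_eq _ _)) => //=.
by rewrite /= in Ci; rewrite Ci.
Qed.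

Lemma lmust_no_deadlock s P C : lmust_state s -> reaches s P C -> ~ all (inert C) P.
Proof.
move=> Hmust [P' [P'P R]] Pinert.
have P'inert c : In c P' -> inert C c by move=> /(Permutation_in _ P'P); apply: all_In.
have [s' [/clos_rt_rt1n_iff R' succ]] := Hmust _ R.
case: s' / R' succ => [|y s' Hy]; last by case: (inert_no_lstep P'inert Hy).
by move=> /P'inert.
Qed.

Lemma lmay_reaches s P C : reaches s P C -> In ([::], LTick) P -> lmay_state s.
Proof.
move=> [P' [P'P R]] tick; exists (P', C); split=> //.
exact: Permutation_in (Permutation_sym P'P) tick.
Qed.

End Reachability.

Lemma ord2_other (i j l : 'I_2) : i != j -> l != i -> l = j.
Proof. by case: i j l => [[|[|?]] ?] [[|[|?]] ?] [[|[|?]] ?] //= *; apply: val_inj. Qed.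

Lemma locks2_ext (i j : 'I_2) (C D : locks 2) : i != j -> C i = D i -> C j = D j -> C = D.
Proof.
move=> ij Ci Cj; apply: functional_extensionality => l.
by have [->//|/(ord2_other ij)->] := eqVneq l i.
Qed.

Lemma ord2_locked (i j l : 'I_2) (C : locks 2) : i != j -> C i = false -> C l = true -> l = j.
Proof. by move=> ij Ci Cl; apply: (ord2_other ij); apply: contraTneq Cl => ->; rewrite Ci. Qed.

Lemma lupd2_full (i j : 'I_2) (C : locks 2) : i != j -> C i = true -> lupd C j true = full_locks 2.
Proof. by move=> ij Ci; apply: (locks2_ext ij); rewrite ?(lupd_at, lupd_other) // eq_sym. Qed.

(** * Test processes of SYNCSIMPLE *)

(* [?c | !a] reduces to [a | c]: [sstep] puts the sender's continuation first. *)
Definition sync2 (u v : ssub) : option (ssub * ssub) :=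
  match u, v with
  | SBang a, SQuest c | SQuest c, SBang a => Some (a, c)
  | _, _ => None
  end.

Lemma sstep_pair u v q : sstep [:: u; v] q -> exists a c, sync2 u v = Some (a, c) /\ q = [:: a; c].
Proof.
move=> [a [c [[|? ?] [uv ->]]]]; last by have := Permutation_length uv.
by case: (Permutation_length_2_inv uv) => [[<- <-]|[<- <-]]; exists a, c.
Qed.

Lemma sstep_sync u v a c : sync2 u v = Some (a, c) -> sstep [:: u; v] [:: a; c].
Proof.
case: u v => [| |u|u] [| |v|v] //= [<- <-].
  by exists u, v, [::]; split=> //; apply: Permutation_refl.
by exists v, u, [::]; split=> //; apply: perm_swap.
Qed.

Lemma sreach_pair u v q : sreach [:: u; v] q ->
  q = [:: u; v] \/ exists a c, sync2 u v = Some (a, c) /\ sreach [:: a; c] q.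
Proof.
move=> /clos_rt_rt1n_iff R; case: q / R => [|p q /sstep_pair[a [c [uv ->]]] /clos_rt_rt1n_iff R];
  by [left | right; exists a, c].
Qed.

Lemma smust_sync u v a c : sync2 u v = Some (a, c) -> smust [:: a; c] -> smust [:: u; v].
Proof.
move=> uv Hmust q /sreach_pair[->|[a' [c' [uv' R]]]]; last first.
  by rewrite uv in uv'; case: uv' => Ea Ec; subst a' c'; apply: Hmust.
have [q' [R succ]] := Hmust _ (rt_refl _ _ _).
by exists q'; split=> //; apply: rt_trans (rt_step _ _ _ _ (sstep_sync uv)) R.
Qed.

Lemma smust_final u v : sync2 u v = None -> In STick [:: u; v] -> smust [:: u; v].
Proof.
move=> uv tick q /sreach_pair[->|[? [? []]]]; last by rewrite uv.
by exists [:: u; v]; split=> //; apply: rt_refl.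
Qed.

Lemma not_smay_sync u v a c : sync2 u v = Some (a, c) -> ~ In STick [:: u; v] ->
  ~ smay [:: a; c] -> ~ smay [:: u; v].
Proof.
move=> uv notick Hmay [q [/sreach_pair[->//|[a' [c' [uv' R]]]] succ]].
by rewrite uv in uv'; case: uv' => Ea Ec; subst a' c'; apply: Hmay; exists q.
Qed.

Lemma not_smay_final u v : sync2 u v = None -> ~ In STick [:: u; v] -> ~ smay [:: u; v].
Proof. by move=> uv notick [q [/sreach_pair[->//|[? [? []]]]]]; rewrite uv. Qed.

Definition act (b : bool) : ssub -> ssub := if b then SBang else SQuest.

Lemma test_tick_zero b : smust [:: act b STick; act (~~ b) SZero].
Proof. by case: b; eapply smust_sync, smust_final => //=; tauto. Qed.

Lemma test_zero_tick b : smust [:: act b SZero; act (~~ b) STick].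
Proof. by case: b; eapply smust_sync, smust_final => //=; tauto. Qed.

Lemma test_nested_tick b : ~ smay [:: act b (act (~~ b) STick); act (~~ b) SZero].
Proof. by case: b; eapply not_smay_sync, not_smay_final => //=; intuition discriminate. Qed.

Lemma test_tick_nested b : smust [:: act b STick; act (~~ b) (act b SZero)].
Proof. by case: b; eapply smust_sync, smust_final => //=; tauto. Qed.

Lemma test_nested_nested b : smust [:: act b (act (~~ b) STick); act (~~ b) (act b SZero)].
Proof. by case: b; eapply smust_sync, smust_sync, smust_final => //=; tauto. Qed.

(* The translations of the five test processes above, [U1] and [U2] translating the
   actions [act b] and [act (~~ b)]. *)
Definition passes_tests k (IS : locks k) (U1 U2 : list (lsym k)) : Prop :=
  [/\ lmust IS [:: (U1, LTick); (U2, LZero)], lmust IS [:: (U1, LZero); (U2, LTick)],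
      ~ lmay IS [:: (U1 ++ U2, LTick); (U2, LZero)], lmust IS [:: (U1, LTick); (U2 ++ U1, LZero)]
    & lmust IS [:: (U1 ++ U2, LTick); (U2 ++ U1, LZero)]].

Lemma correct_passes_tests k (IS : locks k) wb wq b : correct_translation IS wb wq ->
  passes_tests IS (if b then wb else wq) (if b then wq else wb).
Proof.
move=> Htau.
have must p : smust p -> lmust IS (tau wb wq p) by move/(proj1 (proj2 (Htau p))).
have nmay p : ~ smay p -> ~ lmay IS (tau wb wq p) by move=> Hp /(proj2 (proj1 (Htau p))).
move: (must _ (@test_tick_zero b)) (must _ (@test_zero_tick b)) (nmay _ (@test_nested_tick b))
  (must _ (@test_tick_nested b)) (must _ (@test_nested_nested b)).
by case: b; rewrite /tau /= ?cats0.
Qed.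

(** * Two translated actions blocking on different locks *)

Section TwoBlockedActions.
Local Notation full := (full_locks 2).
Variables (i j : 'I_2) (a x b y : list (lsym 2)) (Ca Cb : locks 2).
Hypotheses (ij : i != j) (a_avoids : avoids a i) (b_avoids : avoids b j).
Hypotheses (run_a : run a full [::] Ca) (run_b : run b full [::] Cb) (Cb_i : Cb i = false).
Let U1 := a ++ LP i :: x.
Let U2 := b ++ LP j :: y.
Hypothesis tests : passes_tests full U1 U2.

Let ji : j != i. Proof. by rewrite eq_sym. Qed.

Lemma Ca_i : Ca i = true.
Proof. by rewrite (run_avoids run_a a_avoids). Qed.

Lemma Cb_eq : Cb = lupd full i false.
Proof.
by apply: (locks2_ext ij); rewrite ?(lupd_at, lupd_other) // (run_avoids run_b b_avoids).
Qed.

Lemma run_b_any L : run b L [::] (lupd L i false).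
Proof.
have := run_frame (L j) run_b b_avoids.
have -> : lupd Cb j (L j) = lupd L i false.
  by apply: (locks2_ext ij); rewrite ?(lupd_at, lupd_other).
case Li: (L i).
  by have -> : lupd full j (L j) = L by apply: (locks2_ext ij); rewrite ?(lupd_at, lupd_other).
move/run_release/(_ (lupd_at _ _ _)).
by have -> // : lupd (lupd full j (L j)) i false = L
  by apply: (locks2_ext ij); rewrite ?(lupd_at, lupd_other).
Qed.

Lemma run_U1_head : run (a ++ [:: LP i]) Cb [::] Ca.
Proof.
rewrite Cb_eq; apply: run_trans (run_cat [:: LP i] (run_frame false run_a a_avoids)) _.
apply: run_P; first exact: lupd_at.
by rewrite lupd_idem lupd_same ?Ca_i //; apply: run_refl.
Qed.

Lemma run_U2_from_y L w C : L j = false -> run y (lupd full i false) w C -> run U2 L w C.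
Proof.
move=> Lj Hy; apply: run_trans (run_cat (LP j :: y) (run_b_any L)) _.
apply: run_P; first by rewrite lupd_other.
by have -> : lupd (lupd L i false) j true = lupd full i false
  by apply: (locks2_ext ij); rewrite ?(lupd_at, lupd_other).
Qed.

(* The two translated actions, each followed by an arbitrary continuation, can be
   scheduled down to the residual words [u] and [v] with lock state [D]; being uniform in
   the continuations, the schedule can be replayed inside each of the five tests. *)
Definition reaches_pair u v D : Prop := forall cA cB eA eB,
  reaches ([:: (U1 ++ cA, eA); (U2 ++ cB, eB)], full) [:: (u ++ cA, eA); (v ++ cB, eB)] D.

Lemma reaches_pair_run_fst u v D u' D' :
  reaches_pair u v D -> run u D u' D' -> reaches_pair u' v D'.
Proof. by move=> R Hu cA cB eA eB; apply: reaches_run_fst (R _ _ _ _) (run_cat cA Hu). Qed.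

Lemma reaches_pair_run_snd u v D v' D' :
  reaches_pair u v D -> run v D v' D' -> reaches_pair u v' D'.
Proof. by move=> R Hv cA cB eA eB; apply: reaches_run_snd (R _ _ _ _) (run_cat cB Hv). Qed.

Lemma reaches_pair_start : reaches_pair x (LP j :: y) Ca.
Proof.
have R0 : reaches_pair U1 U2 full by move=> *; apply: reaches_refl.
have R1 := reaches_pair_run_snd R0 (run_cat (LP j :: y) run_b).
by apply: reaches_pair_run_fst R1 _; rewrite /U1 -cat1s catA; apply: run_cat run_U1_head.
Qed.

Lemma no_deadlock_tick_zero u v D :
  reaches_pair u v D -> inert D (u, LTick) -> inert D (v, LZero) -> False.
Proof.
move=> /(_ [::] [::] LTick LZero); rewrite !cats0 => R uI vI.
by case: tests => T1 _ _ _ _; apply: lmust_no_deadlock T1 R _; apply/and3P.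
Qed.

Lemma no_deadlock_zero_tick u v D :
  reaches_pair u v D -> inert D (u, LZero) -> inert D (v, LTick) -> False.
Proof.
move=> /(_ [::] [::] LZero LTick); rewrite !cats0 => R uI vI.
by case: tests => _ T2 _ _ _; apply: lmust_no_deadlock T2 R _; apply/and3P.
Qed.

Lemma reaches_pair_nil_run v L :
  reaches_pair [::] (LP j :: v) L -> exists C, run (LP j :: v) L [::] C.
Proof.
move=> R; have [//|[l [v' [N [Hv Nl]]]]] := run_outcome (LP j :: v) L.
by case: (no_deadlock_zero_tick (reaches_pair_run_snd R Hv)) => //=.
Qed.

Lemma y_not_completes v L C : reaches_pair [::] (LP j :: v) L -> L j = false ->
  ~ run y (lupd full i false) [::] C.
Proof.
move=> /(_ U2 [::] LTick LZero) R Lj /(run_U2_from_y Lj) HU2.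
case: tests => _ _ T3 _ _; apply: T3; rewrite cats0 in R.
by apply: lmay_reaches (reaches_run_fst R HU2) _; left.
Qed.

Lemma y_not_stuck_at_j v L y' N : reaches_pair [::] (LP j :: v) L -> L j = false ->
  run y (lupd full i false) (LP j :: y') N -> N j = false.
Proof.
move=> /(_ U2 U1 LTick LZero) R Lj /(run_U2_from_y Lj) HU2; apply/negbTE/negP => Nj.
case: tests => _ _ _ _ T5; apply: lmust_no_deadlock T5 (reaches_run_fst R HU2) _.
by rewrite /= Nj.
Qed.

Lemma run_U1_stuck x' M : run x Ca (LP i :: x') M -> M j = false ->
  forall L, L i = false -> run U1 L (LP i :: x') M.
Proof.
move=> Hx Mj L Li; have U1E : U1 = (a ++ [:: LP i]) ++ x by rewrite /U1 -catA.
have [->|->] : L = Cb \/ L = lupd Cb j false.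
  by case Lj: (L j); [left|right];
    apply: (locks2_ext ij); rewrite ?Li ?Lj Cb_eq ?(lupd_at, lupd_other).
  by rewrite U1E; apply: run_trans (run_cat x run_U1_head) Hx.
have [H|H] := run_empty_lock j run_U1_head; rewrite U1E; apply: run_trans (run_cat x H) _ => //.
exact: run_release Hx Mj.
Qed.

Lemma reaches_pair_step_fst u v D : reaches_pair u (LP j :: v) D ->
  (exists L, reaches_pair [::] (LP j :: v) L) \/
  exists u' M,
    [/\ run u D (LP i :: u') M, M i = true, M j = false & reaches_pair (LP i :: u') v full].
Proof.
move=> R; have [[L Hu]|[l [u' [M [Hu Ml]]]]] := run_outcome u D.
  by left; exists L; apply: reaches_pair_run_fst R Hu.
have R' := reaches_pair_run_fst R Hu.
case Mj: (M j); first by case: (no_deadlock_tick_zero R') => /=.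
have li := ord2_locked ji Mj Ml; subst l; right; exists u', M; split=> //.
apply: reaches_pair_run_snd R' _; apply: run_P => //.
by rewrite (lupd2_full ij Ml); apply: run_refl.
Qed.

(* If [v] terminates with lock [i] empty, a second copy of [U1], placed after [v] as in the
   test !✓ | ?!0, gets stuck at [P_i] next to the first one. *)
Lemma reaches_pair_step_snd x' M u v : (forall L, L i = false -> run U1 L (LP i :: x') M) ->
  M i = true -> reaches_pair (LP i :: u) v full ->
  exists v' N,
    [/\ run v full (LP j :: v') N, N i = false, N j = true & reaches_pair u (LP j :: v') full].
Proof.
move=> U1_stuck Mi R; have [[L Hv]|[l [v' [N [Hv Nl]]]]] := run_outcome v full.
  have R' := reaches_pair_run_snd R Hv.
  case Li: (L i); first by case: (no_deadlock_tick_zero R') => /=.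
  have := R' [::] U1 LTick LZero; rewrite !cats0 => R''.
  case: tests => _ _ _ T4 _; case: (lmust_no_deadlock T4 (reaches_run_snd R'' (U1_stuck L Li))).
  by rewrite /= Mi.
have R' := reaches_pair_run_snd R Hv.
case Ni: (N i); first by case: (no_deadlock_tick_zero R') => /=.
have lj := ord2_locked ij Ni Nl; subst l; exists v', N; split=> //.
apply: reaches_pair_run_fst R' _; apply: run_P => //.
by rewrite (lupd2_full ji Nl); apply: run_refl.
Qed.

Lemma no_reaches_pair_full x' M y' N : (forall L, L i = false -> run U1 L (LP i :: x') M) ->
  M i = true -> run y (lupd full i false) (LP j :: y') N -> N j = true ->
  forall u v, ~ reaches_pair u (LP j :: v) full.
Proof.
move=> U1_stuck Mi Hy Nj u; have [n] := ubnP (size u); elim: n u => // n IH u lt_u v R.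
case: (reaches_pair_step_fst R) => [[L RL]|[u' [M' [Hu _ _ R']]]].
  have [C /run_cons_P[Lj _]] := reaches_pair_nil_run RL.
  by move: (y_not_stuck_at_j RL Lj Hy); rewrite Nj.
have [v' [N' [_ _ _ R'']]] := reaches_pair_step_snd U1_stuck Mi R'.
by apply: IH R''; apply: leq_trans (run_size Hu) _.
Qed.

Lemma blocked_actions_fail_tests : False.
Proof.
have [[L RL]|[x' [M [Hx Mi Mj R]]]] := reaches_pair_step_fst reaches_pair_start.
  have [C /run_cons_P[Lj Hy]] := reaches_pair_nil_run RL.
  have E : lupd (lupd L j true) i false = lupd full i false.
    by apply: (locks2_ext ij); rewrite ?(lupd_at, lupd_other).
  by have [|] := run_empty_lock i Hy; rewrite E; apply: y_not_completes RL Lj.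
have U1_stuck := run_U1_stuck Hx Mj.
have [y' [N [Hy Ni Nj R']]] := reaches_pair_step_snd U1_stuck Mi R.
exact: no_reaches_pair_full U1_stuck Mi (run_release Hy Ni) Nj _ _ R'.
Qed.

End TwoBlockedActions.

Lemma blocking_type_P_split k (IS : locks k) w i : blocking_type_P IS w i -> IS i = true /\
  exists pre post C, [/\ w = pre ++ LP i :: post, avoids pre i, run pre IS [::] C & C i = true].
Proof.
move=> [pre [post [Hs [Ew pre_i]]]].
have [l [post' [C [Ew' [Hpre Cl]]]]] := run_stuck_prefix Hs.
move: Ew'; rewrite Ew => /app_inv_head[li _]; subst l.
by split; [rewrite -(run_avoids Hpre pre_i) | exists pre, post, C].
Qed.

Lemma full_prefixes_deadlock k (i j : 'I_k) a x b y :
  run a (full_locks k) [::] (full_locks k) -> run b (full_locks k) [::] (full_locks k) ->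
  ~ lmust (full_locks k) [:: (a ++ LP i :: x, LTick); (b ++ LP j :: y, LZero)].
Proof.
move=> Ha Hb /lmust_no_deadlock; apply.
  exact: reaches_run_snd (reaches_run_fst (reaches_refl _ _) (run_cat _ Ha)) (run_cat _ Hb).
by [].
Qed.

Theorem proposition5p16 (IS : locks 2) (wb wq : list (lsym 2)) :
  blocking_type_P IS wb lock1 ->
  blocking_type_P IS wq lock2 ->
  ~ correct_translation IS wb wq.
Proof.
move=> /blocking_type_P_split[IS1 [a [x [Ca [-> a1 run_a Ca1]]]]].
move=> /blocking_type_P_split[IS2 [b [y [Cb [-> b2 run_b Cb2]]]]] Htau.
have l12 : lock1 != lock2 by [].
have l21 : lock2 != lock1 by [].
have IS_full : IS = full_locks 2 by apply: (locks2_ext l12).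
subst IS; case Cb1: (Cb lock1); last first.
  exact: blocked_actions_fail_tests l12 a1 b2 run_a run_b Cb1 (correct_passes_tests true Htau).
case Ca2: (Ca lock2); last first.
  exact: blocked_actions_fail_tests l21 b2 a1 run_b run_a Ca2 (correct_passes_tests false Htau).
have full_a : Ca = full_locks 2 by apply: (locks2_ext l12).
have full_b : Cb = full_locks 2 by apply: (locks2_ext l12).
have [T1 _ _ _ _] := correct_passes_tests true Htau.
by rewrite full_a in run_a; rewrite full_b in run_b; apply: full_prefixes_deadlock run_a run_b T1.
Qed.
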